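(* Consider the NWLA-CuSum stopping time $\overline{\tau}(b)$ with window size $w$ as defined in the context. For any change-point $\nu\ge1$ and any $b>0$, $$\operatorname{ess\,sup}\mathbb{E}_\nu\big[(\overline{\tau}(b)-\nu+1)^+\mid\mathcal{F}_{\nu-1}\big]\le\mathbb{E}_1[\overline{\tau}(b)].$$
   Context: Let $X_1,X_2,\dots\in\mathbb{R}^d$ be independent; for a deterministic change-point $\nu\ge1$, $X_1,\dots,X_{\nu-1}$ have known density $p_0$ and $X_\nu,X_{\nu+1},\dots$ have density $p_1$, w.r.t. a dominating measure $\mu$. $\mathbb{P}_\nu,\mathbb{E}_\nu$ denote probability/expectation with change-point $\nu$; $\mathcal{F}_0$ trivial, $\mathcal{F}_n=\sigma(X_1,\dots,X_n)$. A fixed density estimation procedure maps a finite collection of observations to a density w.r.t. $\mu$; for a positive integer $w$ and $n>w$, $\widehat{p}^w_n$ is its output on $X_{n-w},\dots,X_{n-1}$. Let $\widehat{Z}^w_n:=\log(\widehat{p}^w_n(X_n)/p_0(X_n))$ for $n>w$; $\overline{W}(1)=\dots=\overline{W}(w)=0$, $\overline{W}(n)=(\overline{W}(n-1))^++\widehat{Z}^w_n$ for $n>w$, and $\overline{\tau}(b):=\inf\{n>w:\overline{W}(n)\ge b\}$. *)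

From HB Require Import structures.
From mathcomp Require Import all_boot all_order all_algebra.
From mathcomp Require Import all_classical all_reals all_analysis.
From mathcomp Require Import measurable_realfun.
Set Implicit Arguments.
Unset Strict Implicit.
Unset Printing Implicit Defensive.
Import Order.TTheory GRing.Theory Num.Theory.
Import numFieldNormedType.Exports.
Local Open Scope classical_set_scope.
Local Open Scope ring_scope.

Section defs.
Context {R : realType} {dO dT : measure_display}
  {Omega : measurableType dO} {T : measurableType dT}.

Definition is_density (mu : {measure set T -> \bar R}) (f : T -> R) : Prop :=
  measurable_fun [set: T] f /\ (forall x, 0 <= f x) /\
  (\int[mu]_x (f x)%:E = 1)%E.

Definition mutually_independent (P : probability Omega R)
  (X : nat -> Omega -> T) : Prop :=
  forall (s : seq nat) (A : nat -> set T),
    uniq s -> (forall i, i \in s -> (0 < i)%N) ->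
    (forall i, measurable (A i)) ->
    P (\big[setI/setT]_(i <- s) (X i @^-1` A i)) =
    (\big[*%E/1%E]_(i <- s) P (X i @^-1` A i))%E.

Definition has_density (P : probability Omega R) (mu : {measure set T -> \bar R})
  (Y : Omega -> T) (f : T -> R) : Prop :=
  forall A, measurable A -> P (Y @^-1` A) = (\int[mu]_(x in A) (f x)%:E)%E.

Definition changepoint_model (P : probability Omega R)
  (mu : {measure set T -> \bar R}) (X : nat -> Omega -> T) (p0 p1 : T -> R)
  (nu : nat) : Prop :=
  mutually_independent P X /\
  (forall n, (0 < n)%N -> has_density P mu (X n) (if (n < nu)%N then p0 else p1)).

Definition natF (X : nat -> Omega -> T) (n : nat) : set (set Omega) :=
  <<s [set: Omega],
      [set E | exists i (A : set T), [/\ (1 <= i <= n)%N, measurable A &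
                                         E = X i @^-1` A]] >>.

Definition is_cond_exp (P : probability Omega R) (G : set (set Omega))
  (Y Z : Omega -> \bar R) : Prop :=
  (forall B : set (\bar R), measurable B -> G (Z @^-1` B)) /\
  (forall A, G A -> (\int[P]_(x in A) Z x = \int[P]_(x in A) Y x)%E).

Variables (w : nat) (X : nat -> Omega -> T) (est : w.-tuple T -> T -> R)
  (p0 : T -> R).

Definition window (n : nat) (om : Omega) : w.-tuple T :=
  [tuple X (n - w + i) om | i < w].

(** \hat Z^w_n = log( \hat p^w_n(X_n) / p0(X_n) ), in the extended reals
    (log 0 = -oo, log(a/0) = +oo for a > 0). *)
Definition Zhat (n : nat) (om : Omega) : \bar R :=
  (lne (est (window n om) (X n om))%:E - lne (p0 (X n om))%:E)%E.

Fixpoint Wbar (n : nat) (om : Omega) : \bar R :=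
  match n with
  | 0 => 0%E
  | m.+1 => if (m.+1 <= w)%N then 0%E
            else (maxe (Wbar m om) 0 + Zhat m.+1 om)%E
  end.

Definition tau_bar (b : R) (om : Omega) : \bar R :=
  ereal_inf [set (n%:R)%:E | n in [set n : nat | (w < n)%N /\ (b%:E <= Wbar n om)%E]].

End defs.

From HB Require Import structures.
From mathcomp Require Import all_boot all_order all_algebra.
From mathcomp Require Import all_classical all_reals all_analysis.
From mathcomp Require Import measurable_realfun ess_sup_inf.
From mathcomp Require Import zify.
Import Order.TTheory GRing.Theory Num.Theory.
Import numFieldNormedType.Exports.
Local Open Scope classical_set_scope.
Local Open Scope ring_scope.

Set Implicit Arguments.
Unset Strict Implicit.
Unset Printing Implicit Defensive.

(* The CuSum statistic restarted at time nu - 1, i.e. driven by X_nu, X_(nu+1), ...,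
   never exceeds the original statistic at the corresponding times, because it restarts
   from 0 <= W^+.  Hence (tau_bar - nu + 1)^+ <= tau', the alarm time of the restarted
   procedure.  Writing tau' = sum_k 1{tau' > k}, each event {tau' > k} is determined by
   the block (X_nu, ..., X_(nu+k-1)), which under P_nu is independent of F_(nu-1) and has
   the law of (X_1, ..., X_k) under P_1.  So the integral of (tau_bar - nu + 1)^+ over any
   A in F_(nu-1) is at most P_nu(A) E_1[tau_bar], which bounds the conditional
   expectation by E_1[tau_bar] almost surely. *)

Local Open Scope ereal_scope.

Lemma finite_measure_unique d (R : realType) (T : measurableType d)
    (G : set (set T)) (m1 m2 : {measure set T -> \bar R}) :
  G `<=` measurable -> setI_closed G -> G setT -> m1 setT < +oo ->
  (forall A, G A -> m1 A = m2 A) -> forall A, <<s G >> A -> m1 A = m2 A.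
Proof.
move=> Gm GI GT m1T m1m2.
apply: (g_sigma_algebra_measure_unique G Gm (fun=> setT) (fun=> GT)) => //.
by rewrite bigcup_const.
Qed.

Lemma indep_setI_generated d (R : realType) (Omega : measurableType d)
    (P : probability Omega R) (G : set (set Omega)) (B : set Omega) :
  G `<=` measurable -> setI_closed G -> G setT -> measurable B ->
  (forall A, G A -> P (A `&` B) = P A * P B) ->
  forall A, <<s G >> A -> P (A `&` B) = P A * P B.
Proof.
move=> Gm GI GT mB indepG A GA.
have PBfin : P B \is a fin_num by apply: fin_num_measure.
pose r : {nonneg R} := NngNum (fine_ge0 (measure_ge0 P B)).
have /(_ A GA) : forall A, <<s G >> A -> mrestr P mB A = mscale r P A.
  apply: finite_measure_unique => // [|A' GA'].
    by rewrite /= /mrestr setTI (le_lt_trans (probability_le1 _ mB)) ?ltry.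
  by rewrite /= /mrestr /mscale /r /= indepG // fineK // muleC.
by rewrite /mrestr /mscale /r /= fineK // muleC.
Qed.

Lemma measure_eq0_of_integral_le d (Omega : measurableType d) (R : realType)
    (mu : {finite_measure set Omega -> \bar R}) (A : set Omega) (Z : Omega -> \bar R)
    (c y : R) :
  measurable A -> measurable_fun A Z -> (c < y)%R -> (0 <= y)%R ->
  (forall x, A x -> y%:E <= Z x) -> \int[mu]_(x in A) Z x <= mu A * c%:E -> mu A = 0.
Proof.
move=> mA mZ cy y0 yZ intZ.
have muAfin : mu A \is a fin_num by apply: fin_num_measure.
have : y%:E * mu A <= mu A * c%:E.
  apply: le_trans intZ; rewrite -integral_cst //.
  by apply: ge0_le_integral => // x _; rewrite lee_fin.
rewrite -(fineK muAfin) -!EFinM lee_fin mulrC -subr_le0 -mulrBr pmulr_lle0 ?subr_gt0 //.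
move=> A_le0; apply/eqP; rewrite eq_le -(fineK muAfin) !lee_fin A_le0 /=.
exact/fine_ge0/measure_ge0.
Qed.

Lemma ess_sup_le_of_integral_le d (Omega : measurableType d) (R : realType)
    (mu : {finite_measure set Omega -> \bar R}) (G : set (set Omega))
    (Z : Omega -> \bar R) (c : \bar R) :
  G `<=` measurable -> (forall B, measurable B -> G (Z @^-1` B)) -> 0 <= c ->
  (forall A, G A -> \int[mu]_(x in A) Z x <= mu A * c) -> ess_sup mu Z <= c.
Proof.
move=> Gm GZ; case: c => [c| |] // c0 intZ; last by rewrite leey.
have mZ : measurable_fun setT Z by move=> _ B mB; rewrite setTI; apply/Gm/GZ.
apply/lee_addgt0Pr => e e0; rewrite -EFinD; apply/ess_supP/(ae_le_measureP _ _ mZ).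
have GZce : G (Z @^-1` `](c + e)%:E, +oo[) by apply/GZ/emeasurable_itv.
apply: (measure_eq0_of_integral_le (y := c + e) _ _ _ _ _ (intZ _ GZce)).
- exact: Gm.
- exact: measurable_funS mZ.
- by rewrite ltrDl.
- by rewrite addr_ge0 // ltW // -lee_fin.
- by move=> x /=; rewrite in_itv /= andbT => /ltW.
Qed.

Section tuple_boxes.
Context d (T : measurableType d) (m : nat).

Definition box (B : nat -> set T) : set (m.-tuple T) :=
  [set t | forall i : 'I_m, B i (tnth t i)].

Definition boxes : set (set (m.-tuple T)) :=
  [set box B | B in [set B | forall i, measurable (B i)]].

Lemma boxesT : boxes setT.
Proof. by exists (fun=> setT) => //; apply/seteqP; split. Qed.

Lemma boxesI : setI_closed boxes.
Proof.
move=> _ _ [B mB <-] [B' mB' <-]; exists (fun i => B i `&` B' i).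
  by move=> i; apply: measurableI.
apply/seteqP; split => [t h|t [h h'] i]; last by split.
by split => i; have [] := h i.
Qed.

Lemma measurable_box B : (forall i, measurable (B i)) -> measurable (box B).
Proof.
move=> mB.
have -> : box B = \big[setI/setT]_(i <- enum 'I_m) ((fun t => tnth t i) @^-1` B i).
  rewrite -bigcap_seq; apply/seteqP; split => [t h i _|t h i]; first exact: h.
  by apply: h; rewrite /= mem_enum.
by apply: bigsetI_measurable => i _; rewrite -[X in measurable X]setTI; exact: measurable_tnth.
Qed.

Lemma measurable_tupleE : measurable = <<s boxes >>.
Proof.
apply/seteqP; split; last first.
  apply: smallest_sub; first exact: sigma_algebra_measurable.
  by move=> _ [B mB <-]; apply: measurable_box.
apply: smallest_sub; first exact: smallest_sigma_algebra.
move=> X; rewrite -bigcup_seq => -[i _ [A mA <-]]; apply: sub_sigma_algebra.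
exists (fun j => if j == nat_of_ord i then A else setT) => [j|]; first by case: ifP.
apply/seteqP; split => [t /= /(_ i)|t [_ /= h] j]; first by rewrite eqxx.
by case: ifP => // /eqP /val_inj ->.
Qed.

Lemma tuple_measure_unique (R : realType) (m1 m2 : {measure set (m.-tuple T) -> \bar R}) :
  m1 setT < +oo ->
  (forall B, (forall i, measurable (B i)) -> m1 (box B) = m2 (box B)) ->
  forall C, measurable C -> m1 C = m2 C.
Proof.
move=> m1T m1m2 C; rewrite measurable_tupleE; apply: finite_measure_unique => //.
- by move=> _ [B mB <-]; apply: measurable_box.
- exact: boxesI.
- exact: boxesT.
- by move=> _ [B mB <-]; apply: m1m2.
Qed.

End tuple_boxes.
Arguments box {d T} m B.
Arguments boxes {d T} m.

Lemma ereal_inf_nat_count (R : realType) (S : set nat) :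
  ereal_inf [set (n%:R)%:E | n in S] =
  \sum_(0 <= k <oo) ((`[< forall n, S n -> (k < n)%N >])%:R : R)%:E.
Proof.
have [[n0 Sn0]|noS] := pselect (exists n, S n).
  have [n /asboolP Sn minn] := ex_minnP (ex_intro (fun n => `[< S n >]) n0 (asboolT Sn0)).
  have below k : `[< forall m, S m -> (k < m)%N >] = (k < n)%N.
    apply/asboolP/idP => [/(_ n Sn)//|kn m Sm].
    by apply: leq_trans kn (minn m _); apply/asboolP.
  have -> : ereal_inf [set (n%:R)%:E | n in S] = (n%:R)%:E :> \bar R.
    apply/eqP; rewrite eq_le; apply/andP; split.
      by apply: ge_ereal_inf; exists n%:R%:E => //; exists n.
    apply: le_ereal_inf_tmp => _ [m Sm <-]; rewrite lee_fin ler_nat.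
    by apply: minn; apply/asboolP.
  rewrite (nneseries_split 0 n) => [|k _]; last by rewrite below; case: ltnP.
  rewrite add0n eseries0 => [|k nk _]; last by rewrite below ltnNge nk.
  rewrite adde0 sumEFin (eq_big_nat _ _ (F2 := fun=> 1%R)) ?sumr_const_nat ?subn0 //.
  by move=> k /andP[_ kn]; rewrite below kn.
have noS' : [set (n%:R)%:E | n in S] = set0 :> set (\bar R).
  by apply/seteqP; split => // x [n Sn _]; apply: noS; exists n.
have below k : `[< forall m, S m -> (k < m)%N >] = true.
  by apply/asboolP => m Sm; exfalso; apply: noS; exists m.
rewrite noS' ereal_inf0; apply/esym/eqyP => r r0.
apply: le_trans (nneseries_lim_ge (Num.truncn r).+1 _) => [|k _ _]; last by rewrite below.
rewrite sumEFin lee_fin (eq_big_nat _ _ (F2 := fun=> 1%R)) => [|k _]; last by rewrite below.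
by rewrite sumr_const_nat subn0; exact/ltW/truncnS_gt.
Qed.

Lemma measurable_lne d (A : measurableType d) (R : realType) (f : A -> R) :
  measurable_fun setT f -> measurable_fun setT (fun a => lne (f a)%:E).
Proof.
move=> mf.
rewrite (_ : (fun a => _) = fun a => if (f a <= 0)%R then -oo else (ln (f a))%:E) //.
apply: measurable_fun_ifT; first exact: measurable_fun_ler.
  exact: measurable_cst.
by apply/measurable_EFinP; apply: measurableT_comp => //; exact: measurable_ln.
Qed.

Section cusum_pathwise.
Context {R : realType} {dT : measure_display} {T : measurableType dT}.
Variables (w : nat) (est : w.-tuple T -> T -> R) (p0 : T -> R).

Lemma eq_Wbar dA dB (A : measurableType dA) (B : measurableType dB)
    (Y : nat -> A -> T) (Y' : nat -> B -> T) a a' n :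
  (forall i, (1 <= i <= n)%N -> Y i a = Y' i a') ->
  Wbar Y est p0 n a = Wbar Y' est p0 n a'.
Proof.
elim: n => [//|n IH] YY' /=; case: ifP => // /negbT; rewrite -ltnNge => wn.
rewrite IH => [|i /andP[i1 i_n]]; last by apply: YY'; rewrite i1 ltnW.
congr (_ + _); rewrite /Zhat YY' ?leqnn//.
suff -> : window w Y n.+1 a = window w Y' n.+1 a' by [].
apply: eq_from_tnth => i; rewrite !tnth_mktuple; apply: YY'.
have := ltn_ord i; lia.
Qed.

(* The event {tau_bar Y b > k}, see tau_bar_series. *)
Definition no_alarm dA (A : measurableType dA) (Y : nat -> A -> T) (b : R) k : set A :=
  [set a | forall n, (w < n <= k)%N -> Wbar Y est p0 n a < b%:E].

Lemma eq_no_alarm dA dB (A : measurableType dA) (B : measurableType dB)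
    (Y : nat -> A -> T) (Y' : nat -> B -> T) a a' b k :
  (forall i, (1 <= i <= k)%N -> Y i a = Y' i a') ->
  no_alarm Y b k a <-> no_alarm Y' b k a'.
Proof.
move=> YY'; have WW' n : (n <= k)%N -> Wbar Y est p0 n a = Wbar Y' est p0 n a'.
  by move=> nk; apply: eq_Wbar => i /andP[i1 ik]; apply: YY'; rewrite i1 (leq_trans ik).
by split=> h n /andP[wn nk]; [rewrite -WW'|rewrite WW'] => //; apply: h; rewrite wn.
Qed.

Lemma tau_bar_ge0 dA (A : measurableType dA) (Y : nat -> A -> T) b a :
  0 <= tau_bar Y est p0 b a.
Proof. by apply: le_ereal_inf_tmp => _ [n _ <-]; rewrite lee_fin. Qed.

Variables (dA : measure_display) (A : measurableType dA) (Y : nat -> A -> T).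
Local Notation Yshift k := (fun i => Y (i + k)%N).

Lemma Zhat_shift k n a : (w <= n)%N -> Zhat (Yshift k) est p0 n a = Zhat Y est p0 (n + k) a.
Proof.
move=> wn; rewrite /Zhat; congr (lne (est _ _)%:E - _).
by apply: eq_from_tnth => i; rewrite !tnth_mktuple; congr (Y _ a); lia.
Qed.

Lemma Wbar_shift_le k n a : (w < n)%N ->
  Wbar (Yshift k) est p0 n a <= Wbar Y est p0 (n + k) a.
Proof.
have step m : (w < m.+1)%N -> maxe (Wbar (Yshift k) est p0 m a) 0 <=
    maxe (Wbar Y est p0 (m + k) a) 0 ->
    Wbar (Yshift k) est p0 m.+1 a <= Wbar Y est p0 (m.+1 + k) a.
  rewrite ltnS => wm le_max.
  rewrite addSn /= ltnNge wm ltnNge (leq_trans wm (leq_addr k m)) /=.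
  by rewrite -addSn Zhat_shift ?(leq_trans wm) // leeD2r.
have max_le m : maxe (Wbar (Yshift k) est p0 m a) 0 <= maxe (Wbar Y est p0 (m + k) a) 0.
  elim: m => [|m IH]; first by rewrite /= maxxx le_max lexx orbT.
  have [mw|wm] := leqP m.+1 w; first by rewrite /= mw maxxx le_max lexx orbT.
  by apply: le_max2 => //; exact: step.
by case: n => // n wn; apply: step.
Qed.

Lemma tau_bar_shift k b a :
  tau_bar Y est p0 b a - (k%:R)%:E <= tau_bar (Yshift k) est p0 b a.
Proof.
apply: le_ereal_inf_tmp => _ [n [wn bW] <-].
rewrite leeBlDr// -EFinD -natrD; apply: ge_ereal_inf; exists (n + k)%:R%:E => //.
exists (n + k)%N => //; split; first by rewrite ltn_addr.
by apply: le_trans bW _; apply: Wbar_shift_le.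
Qed.

Lemma tau_bar_restart nu b a : (1 <= nu)%N ->
  maxe (tau_bar Y est p0 b a - (nu%:R)%:E + 1) 0 <= tau_bar (Yshift nu.-1) est p0 b a.
Proof.
move=> nu1; rewrite ge_max tau_bar_ge0 andbT; apply: le_trans (tau_bar_shift _ _ _).
case: (tau_bar Y est p0 b a) => [r| |] //=.
by rewrite -EFinD -EFinB lee_fin -[nu in nu%:R](prednK nu1) -natr1 opprD addrA subrK.
Qed.

Lemma tau_bar_series b a :
  tau_bar Y est p0 b a = \sum_(0 <= k <oo) (\1_(no_alarm Y b k) a : R)%:E.
Proof.
rewrite /tau_bar ereal_inf_nat_count; apply: eq_eseriesr => k _; rewrite indicE.
suff -> : (a \in no_alarm Y b k) =
    `[< forall n, (w < n)%N /\ b%:E <= Wbar Y est p0 n a -> (k < n)%N >] by [].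
apply/idP/asboolP => [/set_mem na n [wn bW]|h].
  by rewrite ltnNge; apply/negP => nk; have := na n; rewrite wn nk ltNge bW => /(_ isT).
apply/mem_set => n /andP[wn nk]; rewrite ltNge; apply/negP => bW.
by have := h n (conj wn bW); rewrite ltnNge nk.
Qed.

End cusum_pathwise.

Section cusum_measurability.
Context {R : realType} {dT : measure_display} {T : measurableType dT}.
Variables (w : nat) (est : w.-tuple T -> T -> R) (p0 : T -> R).
Hypothesis mp0 : measurable_fun setT p0.
Hypothesis mest : measurable_fun [set: w.-tuple T * T] (fun xy => est xy.1 xy.2).
Variables (dA : measure_display) (A : measurableType dA) (Y : nat -> A -> T).
Hypothesis mY : forall i, measurable_fun setT (Y i).

Lemma measurable_window n : measurable_fun setT (window w Y n).
Proof.
apply/measurable_fun_tnthP => i.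
by rewrite (_ : _ \o _ = Y (n - w + i)%N) //; apply: funext => a /=; rewrite tnth_mktuple.
Qed.

Lemma measurable_Zhat n : measurable_fun setT (Zhat Y est p0 n).
Proof.
apply: emeasurable_funB; apply: measurable_lne; last exact: measurableT_comp.
apply: (measurableT_comp (f := fun xy => est xy.1 xy.2)
    (g := fun a => (window w Y n a, Y n a))) => //.
exact: measurable_fun_pair (measurable_window n) (mY n).
Qed.

Lemma measurable_Wbar n : measurable_fun setT (Wbar Y est p0 n).
Proof.
elim: n => [|n IH]; first exact: measurable_cst.
rewrite [Wbar _ _ _ _]/=.
case: ltnP => _; first exact: measurable_cst.
by apply: emeasurable_funD (measurable_Zhat _); apply: measurable_maxe.
Qed.

Lemma measurable_no_alarm b k : measurable (no_alarm est p0 Y b k).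
Proof.
rewrite (_ : no_alarm _ _ _ _ _ =
  \bigcap_(n in [set n | (w < n <= k)%N]) [set a | Wbar Y est p0 n a < b%:E]) //.
apply: bigcap_measurableType => n _; rewrite -[X in measurable X]setTI.
exact: emeasurable_fun_infty_o (measurable_Wbar n) _.
Qed.

Lemma measurable_tau_bar b : measurable_fun setT (tau_bar Y est p0 b).
Proof.
rewrite (_ : tau_bar _ _ _ _ =
    fun a => \sum_(0 <= k <oo) (\1_(no_alarm est p0 Y b k) a : R)%:E).
  apply: (ge0_emeasurable_sum _ (P := predT)) => // k _.
  exact/measurable_EFinP/measurable_indic/measurable_no_alarm.
by apply: funext => a; rewrite tau_bar_series.
Qed.

End cusum_measurability.

Section changepoint_model.
Context {R : realType} {dO dT : measure_display} {Omega : measurableType dO}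
  {T : measurableType dT}.
Variables (mu : {measure set T -> \bar R}) (p0 p1 : T -> R)
  (P : nat -> probability Omega R) (X : nat -> Omega -> T).
Hypothesis mX : forall n, measurable_fun setT (X n).
Hypothesis model : forall nu, (1 <= nu)%N -> changepoint_model (P nu) mu X p0 p1 nu.

Definition obs_block j m (om : Omega) : m.-tuple T := [tuple X (j + i)%N om | i < m].

Lemma measurable_obs_block j m : measurable_fun setT (obs_block j m).
Proof.
apply/measurable_fun_tnthP => i.
by rewrite (_ : _ \o _ = X (j + i)%N) //; apply: funext => om /=; rewrite tnth_mktuple.
Qed.

Lemma measurable_obs_block_preimage j m C : measurable C -> measurable (obs_block j m @^-1` C).
Proof. by move=> mC; rewrite -[X in measurable X]setTI; exact: measurable_obs_block. Qed.

Lemma obs_block_box j m B :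
  obs_block j m @^-1` box m B = \big[setI/setT]_(i <- iota j m) (X i @^-1` B (i - j)%N).
Proof.
rewrite -bigcap_seq; apply/seteqP; split => [om h i /=|om h i /=].
  rewrite mem_iota => /andP[ji ijm]; have ij : (i - j < m)%N by lia.
  by have := h (Ordinal ij); rewrite /= tnth_mktuple subnKC.
rewrite tnth_mktuple; have := h (j + i)%N.
by rewrite /= mem_iota leq_addr ltn_add2l ltn_ord addKn; apply.
Qed.

Lemma changepoint_indep nu s A : (1 <= nu)%N -> uniq s -> (forall i, i \in s -> (0 < i)%N) ->
  (forall i, measurable (A i)) ->
  P nu (\big[setI/setT]_(i <- s) (X i @^-1` A i)) = \prod_(i <- s) P nu (X i @^-1` A i).
Proof. by move=> nu1; have [indep _] := model nu1; apply: indep. Qed.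

Lemma law_obs_block_box nu m B : (1 <= nu)%N -> (forall i, measurable (B i)) ->
  P nu (obs_block nu m @^-1` box m B) = \prod_(i < m) \int[mu]_(x in B i) (p1 x)%:E.
Proof.
move=> nu1 mB; rewrite obs_block_box changepoint_indep ?iota_uniq// => [|i]; last first.
  by rewrite mem_iota; lia.
rewrite -[in iota nu m](addn0 nu) iotaDl big_map.
rewrite (_ : iota 0 m = index_iota 0 m) ?big_mkord; last by rewrite /index_iota subn0.
have [_ density] := model nu1.
apply: eq_bigr => i _; rewrite (density _ (ltn_addr i nu1) _ (mB _)).
by rewrite ltnNge leq_addr addKn.
Qed.

Lemma law_obs_block nu m C : (1 <= nu)%N -> measurable C ->
  P nu (obs_block nu m @^-1` C) = P 1%N (obs_block 1 m @^-1` C).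
Proof.
move=> nu1; apply: (tuple_measure_unique (m1 := pushforward (P nu) (obs_block nu m))
    (m2 := pushforward (P 1%N) (obs_block 1 m))); try exact: measurable_obs_block.
  by move=> mf; rewrite /= /pushforward preimage_setT probability_setT ltry.
by move=> mf mf1 B mB; rewrite /= /pushforward !law_obs_block_box.
Qed.

Definition cylinder n (A : nat -> set T) : set Omega :=
  \big[setI/setT]_(i <- iota 1 n) (X i @^-1` A i).

Definition cylinders n : set (set Omega) :=
  [set cylinder n A | A in [set A | forall i, measurable (A i)]].

Lemma measurable_cylinder n A : (forall i, measurable (A i)) -> measurable (cylinder n A).
Proof.
move=> mA; apply: bigsetI_measurable => i _.
by rewrite -[X in measurable X]setTI; exact: mX.
Qed.

Lemma cylinders_measurable n : cylinders n `<=` measurable.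
Proof. by move=> _ [A mA <-]; apply: measurable_cylinder. Qed.

Lemma cylindersT n : cylinders n setT.
Proof.
by exists (fun=> setT) => //; rewrite /cylinder big1_seq // => i _; rewrite preimage_setT.
Qed.

Lemma cylindersI n : setI_closed (cylinders n).
Proof.
move=> _ _ [A mA <-] [A' mA' <-]; exists (fun i => A i `&` A' i).
  by move=> i; apply: measurableI.
by rewrite /cylinder -big_split; apply: eq_bigr => i _; rewrite preimage_setI.
Qed.

Lemma natF_sub_cylinders n : natF X n `<=` <<s cylinders n >>.
Proof.
apply: smallest_sub; first exact: smallest_sigma_algebra.
move=> _ [i [A [/andP[i1 iN] mA ->]]]; apply: sub_sigma_algebra.
exists (fun j => if j == i then A else setT) => [j|]; first by case: ifP.
rewrite /cylinder -bigcap_seq; apply/seteqP; split => [om h|om h j _].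
  by have := h i; rewrite /= mem_iota i1 eqxx /=; apply; lia.
by rewrite /=; case: eqP => // ->.
Qed.

Lemma natF_measurable n : natF X n `<=` measurable.
Proof.
have sub : <<s cylinders n >> `<=` measurable.
  by apply: smallest_sub; [exact: sigma_algebra_measurable|exact: cylinders_measurable].
by move=> A /natF_sub_cylinders /sub.
Qed.

Lemma indep_cylinder_box nu m A B : (1 <= nu)%N ->
  (forall i, measurable (A i)) -> (forall i, measurable (B i)) ->
  P nu (cylinder nu.-1 A `&` obs_block nu m @^-1` box m B) =
  P nu (cylinder nu.-1 A) * P nu (obs_block nu m @^-1` box m B).
Proof.
move=> nu1 mA mB; pose AB i := if (i < nu)%N then A i else B (i - nu)%N.
have mAB i : measurable (AB i) by rewrite /AB; case: ifP.
have -> : cylinder nu.-1 A = \big[setI/setT]_(i <- iota 1 nu.-1) (X i @^-1` AB i).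
  by apply: eq_big_seq => i; rewrite mem_iota /AB => ?; rewrite ifT //; lia.
have -> : obs_block nu m @^-1` box m B = \big[setI/setT]_(i <- iota nu m) (X i @^-1` AB i).
  rewrite obs_block_box; apply: eq_big_seq => i; rewrite mem_iota /AB => ?.
  by rewrite ifF //; lia.
have iotaE : iota 1 nu.-1 ++ iota nu m = iota 1 (nu.-1 + m) by rewrite iotaD add1n prednK.
rewrite -big_cat iotaE !changepoint_indep ?iota_uniq // -?iotaE ?big_cat // => i.
all: by rewrite ?mem_cat !mem_iota; lia.
Qed.

Lemma indep_cylinder_obs_block nu m A C : (1 <= nu)%N ->
  (forall i, measurable (A i)) -> measurable C ->
  P nu (cylinder nu.-1 A `&` obs_block nu m @^-1` C) =
  P nu (cylinder nu.-1 A) * P nu (obs_block nu m @^-1` C).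
Proof.
move=> nu1 mA mC; rewrite setIC muleC.
apply: (indep_setI_generated (G := preimage_set_system setT (obs_block nu m) (boxes m))).
- move=> _ [_ [B mB <-] <-]; rewrite setTI.
  by apply: measurable_obs_block_preimage; exact: measurable_box.
- move=> _ _ [_ [B mB <-] <-] [_ [B' mB' <-] <-].
  exists (box m B `&` box m B'); last by rewrite !setTI preimage_setI.
  by apply: boxesI; [exists B|exists B'].
- by exists setT; [exact: boxesT|rewrite preimage_setT setTI].
- exact: measurable_cylinder.
- move=> _ [_ [B mB <-] <-]; rewrite setTI setIC muleC.
  exact: indep_cylinder_box.
- rewrite g_sigma_preimageE; exists C; last by rewrite setTI.
  by move: mC; rewrite measurable_tupleE.
Qed.

Lemma indep_natF_obs_block nu m A C : (1 <= nu)%N -> natF X nu.-1 A -> measurable C ->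
  P nu (A `&` obs_block nu m @^-1` C) = P nu A * P nu (obs_block nu m @^-1` C).
Proof.
move=> nu1 FA mC; apply: (indep_setI_generated (G := cylinders nu.-1)) => //.
- exact: cylinders_measurable.
- exact: cylindersI.
- exact: cylindersT.
- exact: measurable_obs_block_preimage.
- by move=> _ [A0 mA0 <-]; apply: indep_cylinder_obs_block.
- exact: natF_sub_cylinders.
Qed.

Variables (w : nat) (est : w.-tuple T -> T -> R).
Hypothesis mp0 : measurable_fun setT p0.
Hypothesis mest : measurable_fun [set: w.-tuple T * T] (fun xy => est xy.1 xy.2).

(* The i-th entry of t counting from 1, like the observations; point when out of range. *)
Definition tuple_obs m i (t : m.-tuple T) : T := nth point t i.-1.

Lemma measurable_tuple_obs m i : measurable_fun setT (@tuple_obs m i).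
Proof.
have [im|mi] := ltnP i.-1 m.
  rewrite (_ : tuple_obs i = fun t => tnth t (Ordinal im)); first exact: measurable_tnth.
  by apply: funext => t; rewrite /tuple_obs (tnth_nth point).
rewrite (_ : tuple_obs i = fun _ => point); first exact: measurable_cst.
by apply: funext => t; rewrite /tuple_obs nth_default // size_tuple.
Qed.

Lemma no_alarm_shift j k b : (1 <= j)%N ->
  no_alarm est p0 (fun i => X (i + j.-1)%N) b k =
  obs_block j k @^-1` no_alarm est p0 (@tuple_obs k) b k.
Proof.
move=> j1; suff same om : no_alarm est p0 (fun i => X (i + j.-1)%N) b k om <->
    no_alarm est p0 (@tuple_obs k) b k (obs_block j k om).
  by apply/seteqP; split => om /same.
apply: eq_no_alarm => i /andP[i1 ik]; have ik' : (i.-1 < k)%N by lia.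
by rewrite /tuple_obs -(tnth_nth point _ (Ordinal ik')) tnth_mktuple /=; congr (X _ om); lia.
Qed.

Lemma integral_tau_bar_shift q j D b : (1 <= j)%N -> measurable D ->
  \int[P q]_(om in D) tau_bar (fun i => X (i + j.-1)%N) est p0 b om =
  \sum_(0 <= k <oo) P q (obs_block j k @^-1` no_alarm est p0 (@tuple_obs k) b k `&` D).
Proof.
move=> j1 mD; have mshift i : measurable_fun setT (X (i + j.-1)%N) := mX _.
under eq_integral do rewrite tau_bar_series.
rewrite integral_nneseries // => [|k]; last first.
  apply: measurable_funS (_ : measurable_fun setT _) => //.
  exact/measurable_EFinP/measurable_indic/(measurable_no_alarm mp0 mest mshift).
apply: eq_eseriesr => k _.
rewrite integral_indic //; first by rewrite no_alarm_shift.
apply: (measurable_no_alarm mp0 mest mshift).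
Qed.

Lemma integral_natF_tau_bar_restart nu A b : (1 <= nu)%N -> natF X nu.-1 A ->
  \int[P nu]_(om in A) tau_bar (fun i => X (i + nu.-1)%N) est p0 b om =
  P nu A * \int[P 1%N]_om tau_bar X est p0 b om.
Proof.
move=> nu1 FA; have mA := natF_measurable FA.
have PAfin : P nu A \is a fin_num by apply: fin_num_measure.
rewrite -[in RHS](_ : (fun i => X (i + (1%N).-1)%N) = X); last first.
  by apply: funext => i; rewrite addn0.
rewrite !integral_tau_bar_shift // -(fineK PAfin) -nneseriesZl => [|k _]; last first.
  exact: measure_ge0.
apply: eq_eseriesr => k _.
have mC : measurable (no_alarm est p0 (@tuple_obs k) b k).
  by apply: (measurable_no_alarm mp0 mest); exact: measurable_tuple_obs.
by rewrite setIT (fineK PAfin) setIC indep_natF_obs_block // law_obs_block.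
Qed.

Lemma integral_natF_detection_delay_le nu A b : (1 <= nu)%N -> natF X nu.-1 A ->
  \int[P nu]_(om in A) maxe (tau_bar X est p0 b om - (nu%:R)%:E + 1) 0 <=
  P nu A * \int[P 1%N]_om tau_bar X est p0 b om.
Proof.
move=> nu1 FA; rewrite -integral_natF_tau_bar_restart //.
have mA := natF_measurable FA.
apply: ge0_le_integral => //.
- by move=> om _; rewrite le_max lexx orbT.
- apply: measurable_funS (_ : measurable_fun setT _) => //.
  apply: measurable_maxe => //; apply: emeasurable_funD => //.
  by apply: emeasurable_funB => //; apply: (measurable_tau_bar mp0 mest mX).
- apply: measurable_funS (_ : measurable_fun setT _) => //.
  by apply: (measurable_tau_bar mp0 mest) => i; apply: mX.
- by move=> om _; apply: tau_bar_restart.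
Qed.

End changepoint_model.

Local Close Scope ereal_scope.

Theorem lemma5 (R : realType) (d : nat) (dO : measure_display)
  (Omega : measurableType dO)
  (mu : {measure set (d.-tuple R) -> \bar R})
  (p0 p1 : d.-tuple R -> R)
  (P : nat -> probability Omega R)
  (X : nat -> Omega -> d.-tuple R)
  (w : nat) (est : w.-tuple (d.-tuple R) -> d.-tuple R -> R)
  (hw : (0 < w)%N)
  (hp0 : is_density mu p0) (hp1 : is_density mu p1)
  (hest : forall s, is_density mu (est s))
  (hest_meas : measurable_fun [set: w.-tuple (d.-tuple R) * d.-tuple R]
                 (fun xy => est xy.1 xy.2))
  (hX : forall n, measurable_fun [set: Omega] (X n))
  (hmodel : forall nu, (1 <= nu)%N -> changepoint_model (P nu) mu X p0 p1 nu)
  (nu : nat) (b : R) :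
  (1 <= nu)%N -> 0 < b ->
  forall Z : Omega -> \bar R,
    is_cond_exp (P nu) (natF X nu.-1)
      (fun om => maxe (tau_bar X est p0 b om - (nu%:R)%:E + 1)%E 0%E) Z ->
    (ess_sup (P nu) Z <= \int[P 1%N]_om tau_bar X est p0 b om)%E.
Proof.
move=> nu1 _ Z [GZ intZ].
apply: (ess_sup_le_of_integral_le (natF_measurable hX (n := nu.-1)) GZ) => [|A FA].
  by apply: integral_ge0 => om _; exact: tau_bar_ge0.
rewrite intZ //.
exact: (integral_natF_detection_delay_le hX hmodel hp0.1 hest_meas b nu1 FA).
Qed.
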